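(* Assume $n$ is even. If $n\equiv 0\pmod 4$ and $q$ is odd, then exactly two lines of $\mathcal D$ are fixed (setwise) by $j$; otherwise exactly one line of $\mathcal D$ is fixed by $j$.
   Context: Let $q$ be a prime power, $F=\mathbb F_q$, $n\ge 2$ an integer, and $L=\mathbb F_{q^n}\supseteq F$. Regard $L$ as an $n$-dimensional $F$-vector space; $\mathrm{PG}(n-1,q)$ denotes the projective space whose points are the one-dimensional $F$-subspaces $Fx$, $x\in L^*$, and whose lines are the two-dimensional $F$-subspaces (identified with their sets of points). Define $j:\mathrm{PG}(n-1,q)\to\mathrm{PG}(n-1,q)$ by $j(Fx)=Fx^{-1}$. When $n$ is even, $C$ denotes the unique subfield of $L$ of order $q^2$; for $x\in L^*$, $Cx$ is a two-dimensional $F$-subspace of $L$, regarded as a line of $\mathrm{PG}(n-1,q)$, and $\mathcal D=\{Cx: x\in L^*\}$ is the Desarguesian line spread. A line $\ell$ is fixed by $j$ if $j(\ell)=\ell$ as sets of points. *)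

From HB Require Import structures.
From mathcomp Require Import all_boot all_order all_algebra all_fingroup all_field.
Set Implicit Arguments. Unset Strict Implicit. Unset Printing Implicit Defensive.
Import GRing.Theory.
Local Open Scope ring_scope.

(* L is an F-vector space; points of PG(n-1,q) are the F-lines <[x]>%VS,
   x <> 0; the map j sends the point <[x]> to <[x^-1]>. *)
Definition jpoint (F : fieldType) (L : fieldExtType F) (x : L) : {vspace L} :=
  <[x^-1]>%VS.

(* The line Cx (a two-dimensional F-subspace when C has F-dimension 2). *)
Definition desline (F : fieldType) (L : fieldExtType F) (C : {subfield L}) (x : L)
  : {vspace L} := (C * <[x]>)%VS.

(* j(l) = l as sets of points: j maps every point of l into l, and every
   point of l is the image under j of some point of l. *)
Definition fixed_by_j (F : fieldType) (L : fieldExtType F) (l : {vspace L}) : Prop :=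
  (forall x : L, x != 0 -> x \in l -> (jpoint x <= l)%VS) /\
  (forall y : L, y != 0 -> y \in l ->
     exists2 x : L, (x != 0) && (x \in l) & jpoint x = <[y]>%VS).

Definition in_spread (F : fieldType) (L : fieldExtType F) (C : {subfield L})
  (l : {vspace L}) : Prop :=
  exists2 x : L, x != 0 & l = desline C x.

(* Let L = GF(q^n) with n = 2t even and C = GF(q^2).  A line Cx of the spread
   is fixed by j : <x> |-> <x^-1> iff x^2 lies in C, and Cx = Cy iff x/y lies
   in C.  With Q = q^2 - 1, membership of a unit a in C reads a^Q = 1, so
   x^2 \in C means x^Q = 1 (the line C itself) or x^Q = -1, and any two
   solutions of x^Q = -1 span the same line.  Writing
   q^n - 1 = Q * m with m = 1 + q^2 + ... + q^(2(t-1)) (the size of the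
   spread), a solution of x^Q = -1 outside C exists iff m is even: if m is
   odd then 1 = x^(Qm) = (-1)^m forces x^Q = 1, while if m = 2h is even the
   element g^h, for a generator g of the cyclic group of units, has as Q-th
   power a square root of 1 different from 1.  Finally m is even iff q is odd and t
   is even, i.e. iff 4 | n and q is odd. *)

From HB Require Import structures.
From mathcomp Require Import all_boot all_order all_algebra all_fingroup all_field.
From mathcomp Require Import zify ring cyclic.
Import GRing.Theory.
Local Open Scope ring_scope.

Lemma odd_geom_sum (x t : nat) :
  odd (\sum_(i < t) x ^ i) = (0 < t)%N && (~~ odd x || odd t).
Proof.
elim: t => [|t IHt]; first by rewrite big_ord0.
rewrite big_ord_recr /= oddD IHt oddX.
by case: t {IHt} => [|t]; case: (odd x); rewrite //= ?big_ord0; case: (odd t).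
Qed.

Section SpreadLines.
Context {F : fieldType} {L : fieldExtType F} {C : {subfield L}}.

Lemma mem_desline (x y : L) : x != 0 -> (y \in desline C x) = (y / x \in C).
Proof.
move=> x_neq0; apply/idP/idP => [y_in|].
  have: y * x^-1 \in (C * <[x]> * <[x^-1]>)%VS by rewrite memv_mul ?memv_line.
  by rewrite -prodvA prodv_line divff // prodv1.
by move=> yx_in; rewrite /desline -[y](divfK x_neq0) memv_mul ?memv_line.
Qed.

Lemma desline_eqP {x y : L} :
  x != 0 -> y != 0 -> desline C x = desline C y <-> x / y \in C.
Proof.
move=> x_neq0 y_neq0; split => [eq_xy|xy_in].
  by rewrite -mem_desline // -eq_xy mem_desline // divff // rpred1.
apply/vspaceP => z; rewrite !mem_desline //.
have xy_neq0 : x / y != 0 by rewrite mulf_neq0 ?invr_eq0.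
have -> : z / y = z / x * (x / y) by rewrite mulrA divfK.
by rewrite (fpredMr _ xy_in xy_neq0).
Qed.

Lemma fixed_desline {x : L} : x != 0 -> fixed_by_j (desline C x) <-> x ^+ 2 \in C.
Proof.
move=> x_neq0; split.
  case=> /(_ x x_neq0) + _; rewrite mem_desline // divff // rpred1.
  move=> /(_ isT); rewrite -memvE mem_desline // => xx_in.
  by rewrite -rpredV expr2 invfM.
move=> x2_in.
have inv_in z : z != 0 -> z \in desline C x -> z^-1 \in desline C x.
  move=> z_neq0; rewrite !mem_desline // => zx_in.
  have -> : z^-1 / x = (z / x)^-1 * (x ^+ 2)^-1 by field; rewrite z_neq0 x_neq0.
  by rewrite rpredM ?rpredV.
split=> [z z_neq0 z_in | y y_neq0 y_in]; first by rewrite /jpoint -memvE inv_in.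
exists y^-1; first by rewrite invr_eq0 y_neq0 inv_in.
by rewrite /jpoint invrK.
Qed.

Lemma fixed_spread_lineP (l : {vspace L}) :
  in_spread C l /\ fixed_by_j l <->
  exists2 x : L, x != 0 & x ^+ 2 \in C /\ l = desline C x.
Proof.
split=> [[[x x_neq0 ->]] | [x x_neq0 [x2_in ->]]].
  by move/(fixed_desline x_neq0) => x2_in; exists x.
by split; [exists x | apply/(fixed_desline x_neq0)].
Qed.

End SpreadLines.

Section FiniteField.
Context {F : finFieldType} {L : fieldExtType F}.
Local Notation q := #|F|.
Local Notation n := (\dim {:L}).

Lemma mem_subfield_unit (K : {subfield L}) {a : L} :
  a != 0 -> (a \in K) = (a ^+ (q ^ \dim K).-1 == 1).
Proof.
move=> a_neq0; rewrite Fermat's_little_theorem /=.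
have qK_gt0 : (0 < q ^ \dim K)%N by rewrite expn_gt0 ltnW ?finNzRing_gt1.
rewrite -{1}(prednK qK_gt0) exprSr.
apply/eqP/eqP => [aq_eq_a|->]; last by rewrite mul1r.
by apply: (mulIf a_neq0); rewrite mul1r.
Qed.

Lemma unit_expn_pred {a : L} : a != 0 -> a ^+ (q ^ n).-1 = 1.
Proof.
move=> a_neq0; have := mem_subfield_unit (aspacef L) a_neq0.
by rewrite memvf => /esym/eqP.
Qed.

Lemma exists_unit_generator : exists g : L, (q ^ n).-1.-primitive_root g.
Proof.
have cardL : #|finvect_type L| = (q ^ n)%N.
  by have := card_vspace (fullv : {vspace finvect_type L}); rewrite card_vspacef.
pose units := enum (predC1 (0 : finvect_type L)).
have size_units : size units = (q ^ n).-1 by rewrite -cardE cardC1 cardL.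
have all_roots : all (fun a : finvect_type L => (q ^ n).-1.-unity_root (a : L)) units.
  by apply/allP => a; rewrite mem_enum unity_rootE => /unit_expn_pred ->.
have : has (q ^ n).-1.-primitive_root (units : seq L).
  apply: has_prim_root; last exact: eq_leq (esym size_units).
  - by rewrite -subn1 subn_gt0 -{1}(expn0 q) ltn_exp2l ?finNzRing_gt1 ?adim_gt0.
  - exact: all_roots.
  - exact: enum_uniq.
by case/hasP => g _ g_prim; exists g.
Qed.

Section QuadraticSubfield.
Context {C : {subfield L}}.
Hypotheses (dimC2 : \dim C = 2%N) (even_n : ~~ odd n).
Local Notation Q := (q ^ 2).-1.
(* m = (q^n - 1) / (q^2 - 1), the number of lines of the spread. *)
Local Notation m := (\sum_(i < n./2) (q ^ 2) ^ i)%N.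

(* Q > 0, so x^Q = -1 forces x != 0. *)
Lemma Q_gt0 : (0 < Q)%N.
Proof. by rewrite -subn1 subn_gt0 -{1}(expn0 q) ltn_exp2l ?finNzRing_gt1. Qed.

Lemma half_dim_gt0 : (0 < n./2)%N.
Proof.
have : (2 <= n)%N by rewrite -dimC2 dimvS ?subvf.
by case: n even_n => [|[|k]].
Qed.

Lemma units_order : (q ^ n).-1 = (Q * m)%N.
Proof.
by rewrite -predn_exp -expnM -{1}(odd_double_half n) (negbTE even_n) -muln2 mulnC.
Qed.

Lemma spread_size_parity : ((4 %| n)%N && odd q) = ~~ odd m.
Proof.
rewrite odd_geom_sum half_dim_gt0 oddX /=.
rewrite -{1}(odd_double_half n) (negbTE even_n) add0n -muln2.
rewrite -[4%N]/(2 * 2)%N dvdn_pmul2r // dvdn2.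
by case: (odd q); case: (odd n./2).
Qed.

Lemma memC_expQ {a : L} : a != 0 -> (a \in C) = (a ^+ Q == 1).
Proof. by move=> a_neq0; rewrite mem_subfield_unit // dimC2. Qed.

(* If x^2 lies in C then x^Q is a square root of 1. *)
Lemma sq_memC_cases {x : L} : x != 0 -> x ^+ 2 \in C -> x \in C \/ x ^+ Q = -1.
Proof.
move=> x_neq0; rewrite (memC_expQ (expf_neq0 2 x_neq0)) -exprM mulnC exprM sqrf_eq1.
by rewrite -(memC_expQ x_neq0); case/orP => [|/eqP]; [left | right].
Qed.

Lemma expQ_neg1_sq_memC {x : L} : x ^+ Q = -1 -> x != 0 /\ x ^+ 2 \in C.
Proof.
move=> xQ; have x_neq0 : x != 0.
  apply/eqP => x_eq0; move: xQ; rewrite x_eq0 expr0n gtn_eqF ?Q_gt0 //= => /eqP.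
  by rewrite eq_sym oppr_eq0 oner_eq0.
split=> //; rewrite (memC_expQ (expf_neq0 2 x_neq0)).
by rewrite -exprM mulnC exprM xQ sqrrN expr1n.
Qed.

Lemma desline_expQ_neg1 (x y : L) :
  x ^+ Q = -1 -> y ^+ Q = -1 -> desline C x = desline C y.
Proof.
move=> xQ yQ; have [x_neq0 _] := expQ_neg1_sq_memC xQ.
have [y_neq0 _] := expQ_neg1_sq_memC yQ.
apply/(desline_eqP x_neq0 y_neq0).
rewrite (memC_expQ (mulf_neq0 x_neq0 (invr_neq0 y_neq0))).
by rewrite exprMn exprVn xQ yQ divff ?oppr_eq0 ?oner_eq0.
Qed.

Lemma expQ_neg1_memC {x : L} : odd m -> x ^+ Q = -1 -> x \in C.
Proof.
move=> odd_m xQ; have [x_neq0 _] := expQ_neg1_sq_memC xQ.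
have := unit_expn_pred x_neq0.
rewrite units_order exprM xQ -signr_odd odd_m expr1 => neg1_eq1.
by rewrite (memC_expQ x_neq0) xQ neg1_eq1.
Qed.

Lemma exists_expQ_neg1 : ~~ odd m -> exists2 x : L, x ^+ Q = -1 & x \notin C.
Proof.
move=> even_m; have [g g_prim] := exists_unit_generator.
set h := m./2; have m_eq : m = (h * 2)%N.
  by rewrite muln2 -{1}(odd_double_half m) (negbTE even_m).
have N_eq : (q ^ n).-1 = (h * Q * 2)%N by rewrite units_order m_eq; lia.
have hQ_gt0 : (0 < h * Q)%N.
  by move: (prim_order_gt0 g_prim); rewrite N_eq; lia.
have gQ_neq1 : g ^+ (h * Q) != 1.
  rewrite -(prim_order_dvd g_prim) N_eq; apply/negP => /dvdn_leq.
  by move=> /(_ hQ_gt0); lia.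
have gQ : (g ^+ h) ^+ Q = -1.
  have : ((g ^+ h) ^+ Q) ^+ 2 == 1 by rewrite -!exprM mulnA -N_eq prim_expr_order.
  by rewrite sqrf_eq1 -exprM (negbTE gQ_neq1) => /eqP.
exists (g ^+ h) => //; have [gh_neq0 _] := expQ_neg1_sq_memC gQ.
by rewrite memC_expQ // -exprM.
Qed.

Lemma fixed_lines_odd (l : {vspace L}) :
  odd m -> in_spread C l /\ fixed_by_j l <-> l = desline C 1.
Proof.
move=> odd_m; rewrite fixed_spread_lineP; split.
  case=> x x_neq0 [x2_in ->]; apply/desline_eqP; rewrite ?oner_neq0 // divr1.
  by case: (sq_memC_cases x_neq0 x2_in) => // /(expQ_neg1_memC odd_m).
by move=> ->; exists 1; rewrite ?oner_neq0 ?expr1n ?rpred1.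
Qed.

Lemma fixed_lines_even : ~~ odd m ->
  exists2 x : L, desline C x != desline C 1 & forall l : {vspace L},
    in_spread C l /\ fixed_by_j l <-> l = desline C 1 \/ l = desline C x.
Proof.
move=> even_m; have [x xQ x_notin] := exists_expQ_neg1 even_m.
have [x_neq0 x2_in] := expQ_neg1_sq_memC xQ.
exists x => [|l].
  apply/negP => /eqP /desline_eqP; rewrite divr1 (negbTE x_notin).
  by move=> /(_ x_neq0 (oner_neq0 L)).
rewrite fixed_spread_lineP; split.
  case=> y y_neq0 [y2_in ->]; case: (sq_memC_cases y_neq0 y2_in) => [y_in|yQ].
    by left; apply/desline_eqP; rewrite ?oner_neq0 // divr1.
  by right; apply: desline_expQ_neg1.
by case=> ->; [exists 1; rewrite ?oner_neq0 ?expr1n ?rpred1 | exists x].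
Qed.

End QuadraticSubfield.
End FiniteField.

Theorem mainTheorem4 (F : finFieldType) (L : fieldExtType F) (C : {subfield L}) :
  ~~ odd (\dim {:L}) ->
  \dim C = 2%N ->
  exists s : seq {vspace L},
    [/\ uniq s,
        size s = (if ((4 %| \dim {:L})%N && odd #|F|) then 2%N else 1%N)
      & forall l : {vspace L}, l \in s <-> (in_spread C l /\ fixed_by_j l)].
Proof.
move=> even_n dimC2; rewrite (spread_size_parity dimC2 even_n).
case: ifPn => [even_m | /negbNE odd_m].
  have [x x_new fixedP] := fixed_lines_even dimC2 even_n even_m.
  exists [:: desline C 1; desline C x]; split => [|//|l].
    by rewrite /= inE eq_sym x_new.
  rewrite fixedP !inE; split => [/orP[]/eqP|[]->];
    [by left | by right | by rewrite eqxx | by rewrite eqxx orbT].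
exists [:: desline C 1]; split => [//|//|l].
by rewrite inE (fixed_lines_odd dimC2 even_n _ odd_m); split => [/eqP|->].
Qed.
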